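(* Let $1\le p<\infty$ and let $Q$ be a finite set of points in the closed upper half-plane $\{y\ge0\}$ with pairwise distinct $x$-coordinates. For $t\in\mathbb{R}$ and $q\in Q$ write $d(t,q)=\|(t,0)-q\|_p$, and say that $q$ is the farthest point of $Q$ from $t$ if $d(t,q)>d(t,q')$ for all $q'\in Q\setminus\{q\}$. Then: (1) for each $q\in Q$, the set $\{t\in\mathbb{R}: q \text{ is the farthest point of } Q \text{ from } t\}$ is either empty or an interval (connected); and (2) if $t<t'$, $q$ is the farthest point of $Q$ from $t$, $q'$ is the farthest point of $Q$ from $t'$, and $q\neq q'$, then the $x$-coordinate of $q$ is strictly greater than the $x$-coordinate of $q'$. Consequently, the intervals into which the farthest-point Voronoi diagram of $Q$ partitions the $x$-axis, listed from left to right as $I_1,\dots,I_\sigma$, have associated farthest points whose $x$-coordinates are strictly decreasing.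
   Context: $\|\cdot\|_p$ denotes the $L_p$ norm on $\mathbb{R}^2$. *)

From Stdlib Require Import Reals List.
Open Scope R_scope.

(* a^e for a >= 0, with the convention 0^e = 0 (e > 0).
   Rpower alone would give Rpower 0 e = 1, hence the guard. *)
Definition rpow (a e : R) : R := if Rle_dec a 0 then 0 else Rpower a e.

Definition lp_norm (p : R) (v : R * R) : R :=
  rpow (rpow (Rabs (fst v)) p + rpow (Rabs (snd v)) p) (/ p).

Definition dist_p (p t : R) (q : R * R) : R :=
  lp_norm p (t - fst q, 0 - snd q).

Definition farthest (p : R) (Q : list (R * R)) (t : R) (q : R * R) : Prop :=
  In q Q /\ forall q', In q' Q -> q' <> q -> dist_p p t q > dist_p p t q'.

(* Comparing d(t,q) and d(t,q') amounts to comparing the p-th powers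
   S(t,q) = |t - q_x|^p + q_y^p.  If q'_x < q_x, the gap S(t,q) - S(t,q')
   equals |t-q_x|^p - |t-q'_x|^p (plus a constant) and is nonincreasing
   in t, because s |-> |s|^p has nondecreasing increments (it is convex).
   Hence, along the axis, the point with the smaller x-coordinate can only
   gain on the other one when moving right; both claims follow. *)

From Stdlib Require Import Reals List Lra.
Open Scope R_scope.

Lemma rpow_pos a e : 0 < a -> rpow a e = Rpower a e.
Proof. intros Ha; unfold rpow; destruct (Rle_dec a 0); [lra | reflexivity]. Qed.

Lemma rpow_0 e : rpow 0 e = 0.
Proof. unfold rpow; destruct (Rle_dec 0 0); [reflexivity | lra]. Qed.

Lemma rpow_ge0 a e : 0 <= rpow a e.
Proof.
  unfold rpow; destruct (Rle_dec a 0); [lra |].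
  left; apply exp_pos.
Qed.

Lemma rpow_le a b e : 0 < e -> 0 <= a -> a <= b -> rpow a e <= rpow b e.
Proof.
  intros He Ha Hab.
  destruct (Req_dec a 0) as [-> | Ha0].
  - rewrite rpow_0; apply rpow_ge0.
  - rewrite !rpow_pos by lra; apply Rle_Rpower_l; lra.
Qed.

Lemma rpow_lt a b e : 0 < e -> 0 <= a -> a < b -> rpow a e < rpow b e.
Proof.
  intros He Ha Hab.
  destruct (Req_dec a 0) as [-> | Ha0].
  - rewrite rpow_0, rpow_pos by lra; apply exp_pos.
  - rewrite !rpow_pos by lra; apply Rlt_Rpower_l; lra.
Qed.

Section PowerIncrements.
Variable p : R.
Hypothesis Hp : 1 <= p.

Lemma rpow_superadditive x y : 0 <= x -> 0 <= y -> rpow x p + rpow y p <= rpow (x + y) p.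
Proof.
  intros Hx Hy.
  destruct (Req_dec x 0) as [-> | Hx0].
  { rewrite rpow_0, !Rplus_0_l; lra. }
  destruct (Req_dec y 0) as [-> | Hy0].
  { rewrite rpow_0, !Rplus_0_r; lra. }
  assert (Hsplit : forall z, 0 < z -> Rpower z p = z * Rpower z (p - 1)).
  { intros z Hz; replace p with (1 + (p - 1)) at 1 by ring.
    rewrite Rpower_plus, Rpower_1 by lra; reflexivity. }
  rewrite !rpow_pos, !Hsplit by lra.
  assert (Rpower x (p - 1) <= Rpower (x + y) (p - 1)) by (apply Rle_Rpower_l; lra).
  assert (Rpower y (p - 1) <= Rpower (x + y) (p - 1)) by (apply Rle_Rpower_l; lra).
  nra.
Qed.

(* On (0,oo), z |-> (z+d)^p - z^p has derivative p((z+d)^(p-1) - z^(p-1)) >= 0,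
   so it is nondecreasing. *)
Lemma Rpower_increment_mono x y d : 0 < x -> x <= y -> 0 <= d ->
  Rpower (x + d) p - Rpower x p <= Rpower (y + d) p - Rpower y p.
Proof.
  intros Hx Hxy Hd.
  destruct (Req_dec x y) as [<- | Hne]; [lra |].
  set (g := fun z => Rpower (z + d) p - Rpower z p).
  set (g' := fun z => p * Rpower (z + d) (p - 1) * 1 - p * Rpower z (p - 1)).
  assert (Hderiv : forall c, x <= c <= y -> derivable_pt_lim g c (g' c)).
  { intros c Hc; apply derivable_pt_lim_minus.
    - apply (derivable_pt_lim_comp (fun z => z + d) (fun z => Rpower z p)).
      + rewrite <- (Rplus_0_r 1).
        apply derivable_pt_lim_plus; [apply derivable_pt_lim_id | apply derivable_pt_lim_const].
      + apply derivable_pt_lim_power; lra.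
    - apply derivable_pt_lim_power; lra. }
  destruct (MVT_cor2 g g' x y) as [c [Hmvt Hc]]; [lra | exact Hderiv |].
  assert (Rpower c (p - 1) <= Rpower (c + d) (p - 1)) by (apply Rle_Rpower_l; lra).
  assert (0 <= g' c) by (unfold g'; nra).
  unfold g in Hmvt; nra.
Qed.

Lemma rpow_increment_mono x y d : 0 <= x -> x <= y -> 0 <= d ->
  rpow (x + d) p - rpow x p <= rpow (y + d) p - rpow y p.
Proof.
  intros Hx Hxy Hd.
  destruct (Req_dec d 0) as [-> | Hd0].
  { rewrite !Rplus_0_r; lra. }
  destruct (Req_dec x 0) as [-> | Hx0].
  - rewrite Rplus_0_l, rpow_0.
    pose proof (rpow_superadditive y d). lra.
  - rewrite !rpow_pos by lra; apply Rpower_increment_mono; lra.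
Qed.

End PowerIncrements.

Section EvenIncrements.
Variable f : R -> R.
Hypothesis f_mono : forall a b, 0 <= a -> a <= b -> f a <= f b.
Hypothesis f_incr : forall x y d, 0 <= x -> x <= y -> 0 <= d ->
  f (x + d) - f x <= f (y + d) - f y.

Lemma abs_increment_mono_right c s1 s2 : 0 <= c -> 0 <= s1 -> s1 <= s2 ->
  f (Rabs (s1 + c)) - f (Rabs s1) <= f (Rabs (s2 + c)) - f (Rabs s2).
Proof. intros; rewrite !Rabs_right by lra; apply f_incr; lra. Qed.

(* Both increments inside (-oo,0]: the mirror image of the previous case. *)
Lemma abs_increment_mono_left c s1 s2 : 0 <= c -> s1 <= s2 -> s2 <= -c ->
  f (Rabs (s1 + c)) - f (Rabs s1) <= f (Rabs (s2 + c)) - f (Rabs s2).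
Proof.
  intros Hc Hs Hs2; rewrite !Rabs_left1 by lra.
  pose proof (f_incr (- s2 - c) (- s1 - c) c) as Hmirror.
  replace (- s2 - c + c) with (- s2) in Hmirror by ring.
  replace (- s1 - c + c) with (- s1) in Hmirror by ring.
  replace (- (s1 + c)) with (- s1 - c) by ring.
  replace (- (s2 + c)) with (- s2 - c) by ring.
  assert (f (- s2) - f (- s2 - c) <= f (- s1) - f (- s1 - c)) by (apply Hmirror; lra).
  lra.
Qed.

(* Increments straddling 0: f|s+c| increases and f|s| decreases in s. *)
Lemma abs_increment_mono_middle c s1 s2 : -c <= s1 -> s1 <= s2 -> s2 <= 0 ->
  f (Rabs (s1 + c)) - f (Rabs s1) <= f (Rabs (s2 + c)) - f (Rabs s2).
Proof.
  intros H1 H12 H2.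
  rewrite (Rabs_right (s1 + c)), (Rabs_right (s2 + c)), (Rabs_left1 s1), (Rabs_left1 s2) by lra.
  assert (f (s1 + c) <= f (s2 + c)) by (apply f_mono; lra).
  assert (f (- s2) <= f (- s1)) by (apply f_mono; lra).
  lra.
Qed.

Lemma abs_increment_mono_nonpos c s1 s2 : 0 <= c -> s1 <= s2 -> s2 <= 0 ->
  f (Rabs (s1 + c)) - f (Rabs s1) <= f (Rabs (s2 + c)) - f (Rabs s2).
Proof.
  intros Hc H12 H2.
  destruct (Rle_dec s2 (- c)); [apply abs_increment_mono_left; lra |].
  destruct (Rle_dec (- c) s1); [apply abs_increment_mono_middle; lra |].
  eapply Rle_trans; [apply (abs_increment_mono_left c s1 (- c)); lra |].
  apply abs_increment_mono_middle; lra.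
Qed.

Lemma abs_increment_mono c s1 s2 : 0 <= c -> s1 <= s2 ->
  f (Rabs (s1 + c)) - f (Rabs s1) <= f (Rabs (s2 + c)) - f (Rabs s2).
Proof.
  intros Hc H12.
  destruct (Rle_dec s2 0); [apply abs_increment_mono_nonpos; lra |].
  destruct (Rle_dec 0 s1); [apply abs_increment_mono_right; lra |].
  eapply Rle_trans; [apply (abs_increment_mono_nonpos c s1 0); lra |].
  apply abs_increment_mono_right; lra.
Qed.

End EvenIncrements.

Definition pow_dist (p t : R) (q : R * R) : R :=
  rpow (Rabs (t - fst q)) p + rpow (Rabs (0 - snd q)) p.

Lemma pow_dist_ge0 p t q : 0 <= pow_dist p t q.
Proof.
  unfold pow_dist.
  pose proof (rpow_ge0 (Rabs (t - fst q)) p); pose proof (rpow_ge0 (Rabs (0 - snd q)) p); lra.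
Qed.

Lemma dist_p_gt_iff p t q q' : 0 < p ->
  dist_p p t q > dist_p p t q' <-> pow_dist p t q > pow_dist p t q'.
Proof.
  intros Hp.
  change (rpow (pow_dist p t q) (/ p) > rpow (pow_dist p t q') (/ p)
          <-> pow_dist p t q > pow_dist p t q').
  assert (He : 0 < / p) by (apply Rinv_0_lt_compat; lra).
  split; intros H.
  - destruct (Rle_dec (pow_dist p t q) (pow_dist p t q')) as [Hle | Hle]; [| lra].
    pose proof (rpow_le _ _ _ He (pow_dist_ge0 p t q) Hle); lra.
  - apply rpow_lt; [exact He | apply pow_dist_ge0 | exact H].
Qed.

Lemma pow_dist_gap_antitone p q q' t1 t2 : 1 <= p -> fst q' < fst q -> t1 <= t2 ->
  pow_dist p t2 q - pow_dist p t2 q' <= pow_dist p t1 q - pow_dist p t1 q'.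
Proof.
  intros Hp Hx Ht; unfold pow_dist.
  pose proof (abs_increment_mono (fun x => rpow x p)
    (fun a b => rpow_le a b p ltac:(lra)) (rpow_increment_mono p Hp)
    (fst q - fst q') (t1 - fst q) (t2 - fst q)) as Hmono.
  replace (t1 - fst q + (fst q - fst q')) with (t1 - fst q') in Hmono by ring.
  replace (t2 - fst q + (fst q - fst q')) with (t2 - fst q') in Hmono by ring.
  assert (rpow (Rabs (t1 - fst q')) p - rpow (Rabs (t1 - fst q)) p <=
          rpow (Rabs (t2 - fst q')) p - rpow (Rabs (t2 - fst q)) p) by (apply Hmono; lra).
  lra.
Qed.

Lemma farther_persists_right p q q' t1 t2 : 1 <= p -> fst q < fst q' -> t1 <= t2 ->
  dist_p p t1 q > dist_p p t1 q' -> dist_p p t2 q > dist_p p t2 q'.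
Proof.
  intros Hp Hx Ht; rewrite !dist_p_gt_iff by lra; intros H.
  pose proof (pow_dist_gap_antitone p q' q t1 t2 Hp Hx Ht); lra.
Qed.

Lemma farther_persists_left p q q' t1 t2 : 1 <= p -> fst q' < fst q -> t1 <= t2 ->
  dist_p p t2 q > dist_p p t2 q' -> dist_p p t1 q > dist_p p t1 q'.
Proof.
  intros Hp Hx Ht; rewrite !dist_p_gt_iff by lra; intros H.
  pose proof (pow_dist_gap_antitone p q q' t1 t2 Hp Hx Ht); lra.
Qed.

Lemma NoDup_map_fst_neq (Q : list (R * R)) q q' : NoDup (map fst Q) ->
  In q Q -> In q' Q -> q <> q' -> fst q <> fst q'.
Proof.
  induction Q as [| x l IH]; simpl; [tauto |].
  intros Hnd Hq Hq' Hne; inversion Hnd as [| ? ? Hnin Hnd']; subst.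
  destruct Hq as [<- | Hq]; destruct Hq' as [<- | Hq'].
  - congruence.
  - intros E; apply Hnin; rewrite E; apply in_map; assumption.
  - intros E; apply Hnin; rewrite <- E; apply in_map; assumption.
  - apply IH; assumption.
Qed.

Theorem lemma2 (p : R) (Q : list (R * R)) :
  1 <= p ->
  (forall q, In q Q -> 0 <= snd q) ->
  NoDup (map fst Q) ->
  (* (1) the farthest-point region of each q on the x-axis is convex
         (hence empty or an interval) *)
  (forall q t1 t2 t, farthest p Q t1 q -> farthest p Q t2 q ->
     t1 <= t <= t2 -> farthest p Q t q) /\
  (* (2) regions appear in strictly decreasing order of x-coordinate *)
  (forall q q' t t', t < t' -> farthest p Q t q -> farthest p Q t' q' ->
     q <> q' -> fst q > fst q').
Proof.
  intros Hp _ Hnd; split.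
  - intros q t1 t2 t [Hq H1] [_ H2] [Ht1 Ht2]; split; [exact Hq |].
    intros q' Hq' Hne.
    assert (Hx : fst q' <> fst q) by (apply (NoDup_map_fst_neq Q); auto).
    destruct (Rlt_or_le (fst q') (fst q)) as [Hlt | Hge].
    + apply (farther_persists_left p q q' t t2); auto.
    + apply (farther_persists_right p q q' t1 t); auto; lra.
  - intros q q' t t' Htt [Hq H1] [Hq' H2] Hne.
    assert (Hx : fst q <> fst q') by (apply (NoDup_map_fst_neq Q); auto).
    destruct (Rlt_or_le (fst q) (fst q')) as [Hlt | Hge]; [exfalso | lra].
    pose proof (farther_persists_right p q q' t t' Hp Hlt ltac:(lra)
                  (H1 q' Hq' (not_eq_sym Hne))).
    pose proof (H2 q Hq Hne); lra.
Qed.
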